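(* Let $(S,* )$ be a finite cycle set of size $n\ge 2$ which is square-free (i.e. $s*s=s$ for all $s\in S$) and whose permutation group $\mathcal G$ is abelian. Then its class $d$ satisfies $$d\le a_n:=\max\Big\{\prod_{i=1}^k n_i \;\Big|\; k\in\mathbb N,\ 1\le n_1<\dots<n_k,\ n_1+\dots+n_k=n\Big\}.$$
   Context: A cycle set is a set $S$ with a binary operation $*$ such that for every $s$ the map $t\mapsto s*t$ is a bijection and $(s*t)*(s*u)=(t*s)*(t*u)$ for all $s,t,u$. Write $S=\{s_1,\dots,s_n\}$ and let $\psi(s)\in\mathfrak S_n$ satisfy $s_i*s_j=s_{\psi(s_i)(j)}$. The permutation group $\mathcal G$ is the subgroup of $\mathfrak S_n$ generated by $\psi(s_1),\dots,\psi(s_n)$. With $T(s)=s*s$ and $\psi_k(s)=\psi(T^{k-1}(s))\circ\cdots\circ\psi(T(s))\circ\psi(s)$, the (Dehornoy) class $d$ is the least integer $d\ge1$ such that $\psi_d(s)=\mathrm{id}$ for all $s\in S$. *)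

From mathcomp Require Import all_boot all_order all_fingroup.
Set Implicit Arguments. Unset Strict Implicit. Unset Printing Implicit Defensive.

Local Open Scope group_scope.

Definition is_cycle_set (S : finType) (op : S -> S -> S) : Prop :=
  (forall s : S, bijective (op s)) /\
  (forall s t u : S, op (op s t) (op s u) = op (op t s) (op t u)).

Definition square_free (S : finType) (op : S -> S -> S) : Prop :=
  forall s : S, op s s = s.

Definition psi_of (S : finType) (op : S -> S -> S) (psi : S -> {perm S}) : Prop :=
  forall s t : S, psi s t = op s t.

Definition perm_group (S : finType) (psi : S -> {perm S}) : {set {perm S}} :=
  <<[set psi s | s : S]>>.

Definition Tmap (S : finType) (op : S -> S -> S) (s : S) : S := op s s.

(* psi_k(s) = psi(T^{k-1} s) o ... o psi(T s) o psi(s).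
   In mathcomp, (p * q) x = q (p x), so the composite applying psi(s) first
   is the ordered product psi s * psi (T s) * ... * psi (T^{k-1} s). *)
Definition psi_k (S : finType) (op : S -> S -> S) (psi : S -> {perm S})
  (k : nat) (s : S) : {perm S} :=
  \prod_(i < k) psi (iter i (Tmap op) s).

Definition is_class (S : finType) (op : S -> S -> S) (psi : S -> {perm S})
  (d : nat) : Prop :=
  (1 <= d)%N /\ (forall s, psi_k op psi d s = 1) /\
  (forall d', (1 <= d')%N -> (d' < d)%N -> ~ (forall s, psi_k op psi d' s = 1)).

(* Strictly increasing sequences of positive integers correspond exactly to
   finite sets of positive integers (all <= n since the sum is n). *)
Definition a_seq (n : nat) : nat :=
  \max_(A : {set 'I_n.+1} | (ord0 \notin A) && (\sum_(i in A) (i : nat) == n))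
     \prod_(i in A) (i : nat).

(* Since s * s = s, the map T is the identity and psi_k(s) = psi(s)^k, so every
   exponent of the group G annihilates all psi_k(s) and the class is at most
   exp(G).  As G is abelian, exp(G) is the order of a single permutation g.
   That order divides the product of the distinct cycle lengths of g, which are
   distinct positive integers of sum at most n; adding the missing amount to
   the largest of them yields a partition of n into distinct parts with a
   product that is no smaller, hence at most a_n. *)

From mathcomp Require Import all_boot all_order all_fingroup all_solvable.
From mathcomp Require Import zify.
Set Implicit Arguments. Unset Strict Implicit. Unset Printing Implicit Defensive.

Local Open Scope group_scope.

Lemma leq_prod_a_seq n (A : {set 'I_n.+1}) :
  ord0 \notin A -> (\sum_(i in A) (i : nat))%N = n ->
  (\prod_(i in A) (i : nat) <= a_seq n)%N.
Proof. by move=> A0 sumA; apply: leq_bigmax_cond; rewrite A0 sumA eqxx. Qed.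

Lemma exists_distinct_parts_completion n (D : {set 'I_n.+1}) :
  (0 < n)%N -> ord0 \notin D -> (\sum_(i in D) (i : nat) <= n)%N ->
  exists2 A : {set 'I_n.+1},
    (ord0 \notin A) /\ (\sum_(i in A) (i : nat))%N = n &
    (\prod_(i in D) (i : nat) <= \prod_(i in A) (i : nat))%N.
Proof.
move=> n_gt0 D0 sumD.
have [->|[i0 i0D]] := set_0Vmem D.
  exists [set ord_max]; last by rewrite big_set0 big_set1.
  by rewrite in_set1 big_set1 -val_eqE /=; split=> //; lia.
have [m mD m_max] := arg_maxnP (fun i : 'I_n.+1 => i : nat) i0D.
have m_gt0 : (0 < m)%N.
  rewrite lt0n; apply: contra D0 => /eqP m0.
  by rewrite (_ : ord0 = m) //; apply/val_inj; rewrite /= m0.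
have sumDE : (\sum_(i in D) (i : nat) = m + \sum_(i in D :\ m) (i : nat))%N.
  by rewrite (big_setD1 m mD).
pose r := (n - \sum_(i in D) (i : nat))%N.
pose m' : 'I_n.+1 := inord (m + r).
have m'E : (m' : nat) = (m + r)%N by rewrite inordK // ltnS /r; lia.
have m'_notin : m' \notin D :\ m.
  apply/setD1P => -[m'_neq_m m'D]; have := m_max _ m'D.
  rewrite m'E => le_m'_m; move/eqP: m'_neq_m; apply; apply/val_inj.
  by rewrite /= m'E; lia.
exists (m' |: (D :\ m)).
  rewrite big_setU1 //= m'E !inE negb_or negb_and D0 orbT andbT -val_eqE /= m'E.
  rewrite eq_sym -lt0n ltn_addr //; split=> //.
  by move: sumD; rewrite /r sumDE => sumD; rewrite addnAC subnKC.
by rewrite (big_setD1 m mD) big_setU1 //= m'E leq_mul2r leq_addr orbT.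
Qed.

Lemma leq_prod_a_seq_sum_le n (D : {set 'I_n.+1}) :
  (0 < n)%N -> ord0 \notin D -> (\sum_(i in D) (i : nat) <= n)%N ->
  (\prod_(i in D) (i : nat) <= a_seq n)%N.
Proof.
move=> n_gt0 D0 sumD.
have [A [A0 sumA] leDA] := exists_distinct_parts_completion n_gt0 D0 sumD.
exact: leq_trans leDA (leq_prod_a_seq A0 sumA).
Qed.

Section CycleLengths.

Variables (S : finType) (x : {perm S}).

Definition porbit_size (y : S) : 'I_#|S|.+1 := inord #|porbit x y|.

Definition cycle_lengths : {set 'I_#|S|.+1} := [set porbit_size y | y : S].

Lemma porbit_sizeE y : porbit_size y = #|porbit x y| :> nat.
Proof. by rewrite inordK // ltnS max_card. Qed.

Lemma mem_cycle_lengths y : porbit_size y \in cycle_lengths.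
Proof. exact: imset_f. Qed.

Lemma cycle_lengthsP i : reflect (exists y, i = porbit_size y) (i \in cycle_lengths).
Proof. by apply: (iffP imsetP) => [[y _ ->]|[y ->]]; exists y. Qed.

Lemma cycle_lengths0 : ord0 \notin cycle_lengths.
Proof.
apply/cycle_lengthsP => -[y /(congr1 val) /=]; rewrite porbit_sizeE => /esym/eqP.
by rewrite (negbTE (card_porbit_neq0 x y)).
Qed.

Lemma sum_cycle_lengths : (\sum_(i in cycle_lengths) (i : nat) <= #|S|)%N.
Proof.
pose fiber i := [set y | porbit_size y == i].
have le_fiber i : i \in cycle_lengths -> (i <= #|fiber i|)%N.
  case/cycle_lengthsP=> y ->; rewrite porbit_sizeE; apply: subset_leq_card.
  apply/subsetP=> z z_y; rewrite inE; apply/eqP/val_inj.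
  rewrite /= !porbit_sizeE.
  by have /eqP -> : porbit x z == porbit x y by rewrite eq_porbit_mem.
apply: (@leq_trans (\sum_(i in cycle_lengths) #|fiber i|)); first exact: leq_sum.
rewrite -[leqRHS]sum1_card.
rewrite (partition_big porbit_size (mem cycle_lengths)) => [|y _]; last first.
  exact: mem_cycle_lengths.
apply: leq_sum => i _; rewrite -sum1_card; apply: eq_leq.
by apply: eq_bigl => y; rewrite inE.
Qed.

Lemma order_dvdn_prod_cycle_lengths : (#[x] %| \prod_(i in cycle_lengths) (i : nat))%N.
Proof.
rewrite order_dvdn; apply/eqP/permP => y; rewrite perm1.
rewrite (big_setD1 _ (mem_cycle_lengths y)) /= porbit_sizeE expgM.
by apply: permX_fix; rewrite permX iter_porbit.
Qed.

End CycleLengths.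

Lemma order_perm_le_a_seq (S : finType) (x : {perm S}) :
  (0 < #|S|)%N -> (#[x] <= a_seq #|S|)%N.
Proof.
move=> S_gt0; apply: leq_trans (leq_prod_a_seq_sum_le S_gt0 (cycle_lengths0 x)
  (sum_cycle_lengths x)).
apply: dvdn_leq (order_dvdn_prod_cycle_lengths x).
rewrite big_mkcond /=; apply: prodn_gt0 => i; case: ifP => // /cycle_lengthsP[y ->].
by rewrite porbit_sizeE lt0n card_porbit_neq0.
Qed.

Lemma psi_k_square_free (S : finType) (op : S -> S -> S) (psi : S -> {perm S}) k s :
  square_free op -> psi_k op psi k s = psi s ^+ k.
Proof.
move=> sqf; rewrite /psi_k (eq_bigr (fun=> psi s)) => [|i _]; last first.
  by rewrite iter_fix // /Tmap sqf.
by rewrite big_const_ord; elim: k => // k IH; rewrite iterS IH expgS.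
Qed.

Lemma exists_class_le (S : finType) (op : S -> S -> S) (psi : S -> {perm S}) e :
  (0 < e)%N -> (forall s, psi_k op psi e s = 1) ->
  exists2 d : nat, is_class op psi d & (d <= e)%N.
Proof.
move=> e_gt0 psi_e.
pose annihilates d := (0 < d)%N && [forall s, psi_k op psi d s == 1].
have annihilatesP d : (0 < d)%N -> (forall s, psi_k op psi d s = 1) -> annihilates d.
  by move=> d_gt0 psi_d; rewrite /annihilates d_gt0; apply/forallP => s; rewrite psi_d.
have ex_e : exists d, annihilates d by exists e; exact: annihilatesP.
have [d /andP[d_gt0 /forallP psi_d] d_min] := ex_minnP ex_e.
exists d; last exact/d_min/annihilatesP.
split=> //; split=> [s|d' d'_gt0 lt_d'd psi_d']; first exact/eqP.
by have := d_min d' (annihilatesP d' d'_gt0 psi_d'); rewrite leqNgt lt_d'd.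
Qed.

Theorem mainTheorem4 (S : finType) (op : S -> S -> S) (psi : S -> {perm S}) :
  is_cycle_set op -> psi_of op psi -> (2 <= #|S|)%N -> square_free op ->
  abelian (perm_group psi) ->
  exists d : nat, is_class op psi d /\ (d <= a_seq #|S|)%N.
Proof.
move=> _ _ S_ge2 sqf abG.
have psi_exp s : psi_k op psi (exponent (perm_group psi)) s = 1.
  rewrite psi_k_square_free //; apply: expg_exponent.
  by rewrite mem_gen // imset_f.
have [d class_d le_d_exp] := exists_class_le (exponent_gt0 _) psi_exp.
exists d; split=> //; apply: leq_trans le_d_exp _.
have [g _ ->] := exponent_witness (abelian_nil abG).
by apply: order_perm_le_a_seq; lia.
Qed.
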